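(* Let $X$ be a finite set and $S\subset\mathbb F_X$. Then $S$ is UB-generic if and only if for every $n\in\mathbb N$ there exists $\omega_n\in\mathbb F_X$ such that $\omega_n B_n\subset S$.
   Context: $\mathbb F_X$ is the free group on $X$, $|\omega|$ the reduced word length, $B_n=\{\omega\in\mathbb F_X:|\omega|\le n\}$. The Upper Banach density of $S\subset\mathbb F_X$ is $\overline\mu(S)=\limsup_{n\to\infty}\max_{\omega\in\mathbb F_X}\frac{|S\cap\omega B_n|}{|B_n|}$, and $S$ is UB-generic if $\overline\mu(S)=1$. *)

From Stdlib Require Import Reals.
From Coquelicot Require Import Coquelicot.
From mathcomp Require Import all_boot.

Set Implicit Arguments.
Unset Strict Implicit.
Unset Printing Implicit Defensive.

Section FreeGroup.
Variable X : finType.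

(* a letter is a generator x (false) or its inverse x^-1 (true) *)
Definition letter := (X * bool)%type.
Definition inv_letter (a : letter) : letter := (a.1, ~~ a.2).

(* reduced words: no adjacent pair  a a^-1 *)
Definition reduced (w : seq letter) : bool :=
  sorted (fun a b => b != inv_letter a) w.

Definition push (a : letter) (w : seq letter) : seq letter :=
  match w with
  | b :: w' => if b == inv_letter a then w' else a :: w
  | [::] => [:: a]
  end.

Definition reduce (w : seq letter) : seq letter := foldr push [::] w.

Lemma push_reduced a w : reduced w -> reduced (push a w).
Proof.
case: w => [|b w] //= Hw.
case: ifP => Hb.
  by case: w Hw => [|c w] //= /andP [].
by rewrite /= Hb Hw.
Qed.

Lemma reduce_reduced w : reduced (reduce w).
Proof. by elim: w => [|a w IH] //=; apply: push_reduced. Qed.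

Definition FX := {w : seq letter | reduced w}.

Definition FX_of (w : seq letter) : FX := exist _ (reduce w) (reduce_reduced w).

Definition mulFX (u v : FX) : FX := FX_of (proj1_sig u ++ proj1_sig v).

Definition wlen (w : FX) : nat := size (proj1_sig w).

Fixpoint words (k : nat) : seq (seq letter) :=
  match k with
  | 0 => [:: [::]]
  | k'.+1 => [seq a :: w | a <- enum {: letter}, w <- words k']
  end.

(* B_n, enumerated as a duplicate-free list of the elements of F_X of length <= n *)
Definition ball (n : nat) : seq FX :=
  pmap (fun w => (insub w : option FX))
       (flatten [seq words k | k <- iota 0 n.+1]).

(* |S ∩ ωB_n| : the left translate ωB_n is enumerated without repetition by
   mapping left multiplication by ω over B_n *)
Definition card_inter (S : FX -> bool) (om : FX) (n : nat) : nat :=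
  count S [seq mulFX om b | b <- ball n].

Definition ratio (S : FX -> bool) (om : FX) (n : nat) : R :=
  Rdiv (INR (card_inter S om n)) (INR (size (ball n))).

(* max over ω (a finite set of values, so sup = max) *)
Definition max_ratio (S : FX -> bool) (n : nat) : R :=
  real (Lub_Rbar (fun r => exists om : FX, r = ratio S om n)).

Definition UB_density (S : FX -> bool) : Rbar := LimSup_seq (max_ratio S).

Definition UB_generic (S : FX -> bool) : Prop := UB_density S = Rbar.Finite R1.

End FreeGroup.

From Pilot Require Import Defs.
From Stdlib Require Import Reals Lra Classical FunctionalExtensionality.
From Coquelicot Require Import Coquelicot.
From mathcomp Require Import all_boot zify.

Set Implicit Arguments.
Unset Strict Implicit.

(* If S contains a translate of every ball, each maximal ratio is 1.  Otherwise
   some ball B_m, with M = |B_m| elements, has no translate inside S.  For N >= m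
   and any w, each c in B_(N-m) gives some b_c in B_m with w c b_c outside S, and
   c is recovered from (c b_c, b_c) by right cancellation; so w B_N has at least
   |B_(N-m)| / M points outside S.  Cutting a reduced word m letters from its end
   gives |B_N| <= |B_(N-m)| M, so every ratio at level N is at most 1 - 1/M^2 and
   the upper Banach density stays below 1. *)

Section FreeGroupLaws.
Variable X : finType.
Local Open Scope nat_scope.
Local Notation letter := (letter X).
Local Notation reduced := (@reduced X).
Local Notation inv := (@inv_letter X).
Local Notation push := (@push X).

Lemma inv_letterK : involutive inv.
Proof. by case=> x b; rewrite /inv_letter /= negbK. Qed.

Lemma push_inv_letterK a w : reduced w -> push a (push (inv a) w) = w.
Proof.
case: w => [|b w] /=; first by rewrite eqxx.
case: eqP => [->|_] /=; last by rewrite eqxx.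
rewrite inv_letterK; case: w => [|c w] //= /andP [Hc _].
by rewrite (negbTE Hc).
Qed.

Lemma reduce_id w : reduced w -> reduce w = w.
Proof.
elim: w => [|a w IH] //= Hw.
rewrite IH; last exact: path_sorted Hw.
by case: w Hw {IH} => [|b w] //= /andP [/negbTE ->].
Qed.

Definition pushs (u w : seq letter) : seq letter := foldr push w u.

Lemma pushs_reduced u w : reduced w -> reduced (pushs u w).
Proof. by elim: u => [|a u IH] //= Hw; apply/push_reduced/IH. Qed.

Lemma pushs_cat u v w : pushs (u ++ v) w = pushs u (pushs v w).
Proof. exact: foldr_cat. Qed.

Lemma pushs_push a r w :
  reduced r -> reduced w -> pushs (push a r) w = push a (pushs r w).
Proof.
case: r => [|b r] //= Hr Hw; case: eqP => [->|_] //=.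
by rewrite push_inv_letterK // pushs_reduced.
Qed.

Lemma pushs_reduce u w : reduced w -> pushs (reduce u) w = pushs u w.
Proof.
move=> Hw; elim: u => [|a u IH] //=.
by rewrite pushs_push ?reduce_reduced // IH.
Qed.

Lemma reduce_cat u w : reduced w -> reduce (u ++ w) = pushs u w.
Proof. by move=> Hw; rewrite /reduce foldr_cat -/(reduce w) reduce_id. Qed.

Lemma val_mulFX (u v : FX X) : val (mulFX u v) = pushs (val u) (val v).
Proof. by case: v => v Hv; rewrite /= reduce_cat. Qed.

Lemma mulFXA : associative (@mulFX X).
Proof.
move=> u [v Hv] [w Hw]; apply: val_inj; rewrite !val_mulFX /=.
by rewrite -[pushs (val u) v]reduce_cat // pushs_reduce // pushs_cat.
Qed.

Definition winv (u : seq letter) : seq letter := rev (map inv u).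

Lemma winvK : involutive winv.
Proof. by move=> u; rewrite /winv map_rev revK -map_comp (eq_map inv_letterK) map_id. Qed.

Lemma pushs_winvK u w : reduced w -> pushs (winv u) (pushs u w) = w.
Proof.
move=> Hw; elim: u => [|a u IH] //=.
rewrite /winv /= rev_cons /pushs foldr_rcons -/(pushs _ _) -/(winv u).
by rewrite -{2}[a]inv_letterK push_inv_letterK ?pushs_reduced.
Qed.

Definition invFX (u : FX X) : FX X := FX_of (winv (val u)).

Lemma mulFXK (b : FX X) : cancel ((@mulFX X)^~ b) ((@mulFX X)^~ (invFX b)).
Proof.
move=> [d Hd]; apply: val_inj; rewrite -mulFXA !val_mulFX /=.
rewrite -[reduce _]/(pushs _ [::]) -{1}(winvK (val b)) pushs_winvK //.
exact: reduce_id.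
Qed.

Lemma mulFX_inj_r (b : FX X) : injective ((@mulFX X)^~ b).
Proof. exact: can_inj (mulFXK b). Qed.

Lemma size_push a w : size (push a w) <= (size w).+1.
Proof. by case: w => [|b w] //=; case: ifP => //= _; apply: leqW. Qed.

Lemma size_pushs u w : size (pushs u w) <= size u + size w.
Proof. by elim: u => [|a u IH] //=; apply: leq_trans (size_push _ _) _. Qed.

Lemma wlen_mulFX (u v : FX X) : wlen (mulFX u v) <= wlen u + wlen v.
Proof. by rewrite /wlen val_mulFX size_pushs. Qed.

End FreeGroupLaws.

Section Balls.
Variable X : finType.
Local Open Scope nat_scope.
Local Notation ball := (Defs.ball X).

Lemma mem_words k w : (w \in words X k) = (size w == k).
Proof.
elim: k w => [|k IH] [|a w] //=.
- by apply/allpairsP => -[[b v] [_ _]].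
- rewrite eqSS -IH; apply/allpairsP/idP => [[[b v] [_ Hv [_ ->]]] //|Hw].
  by exists (a, w); rewrite /= mem_enum.
Qed.

Lemma uniq_words k : uniq (words X k).
Proof.
elim: k => [|k IH] //=.
by apply: allpairs_uniq => //= [|[a v] [b w] _ _ [-> ->]]; first exact: enum_uniq.
Qed.

Lemma mem_flatten_words s w :
  (w \in flatten [seq words X k | k <- s]) = (size w \in s).
Proof. by elim: s => [|k s IH] //=; rewrite mem_cat IH mem_words in_cons. Qed.

Lemma uniq_flatten_words s : uniq s -> uniq (flatten [seq words X k | k <- s]).
Proof.
elim: s => [|k s IH] //= /andP [Hk Hs].
rewrite cat_uniq uniq_words IH // andbT.
apply/hasPn => w; rewrite mem_flatten_words mem_words => Hw.
by apply: contra Hk => /eqP <-.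
Qed.

Lemma mem_ball n (b : FX X) : (b \in ball n) = (wlen b <= n).
Proof. by rewrite mem_pmap_sub mem_flatten_words mem_iota add0n ltnS. Qed.

Lemma uniq_ball n : uniq (ball n).
Proof. exact/pmap_sub_uniq/uniq_flatten_words/iota_uniq. Qed.

Definition oneFX : FX X := exist _ [::] isT.

Lemma size_ball_gt0 n : 0 < size (ball n).
Proof. by have := mem_ball n oneFX; case: (ball n). Qed.

Definition takeFX k (w : FX X) : FX X := exist (@reduced X) _ (take_sorted k (valP w)).
Definition dropFX k (w : FX X) : FX X := exist (@reduced X) _ (drop_sorted k (valP w)).

Lemma size_ball_le_mul N m :
  m <= N -> size (ball N) <= size (ball (N - m)) * size (ball m).
Proof.
move=> le_mN.
pose cut w := (takeFX (wlen w - m) w, dropFX (wlen w - m) w).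
have cut_inj : injective cut.
  by move=> w1 w2 /(congr1 (fun p => val p.1 ++ val p.2)) /=; rewrite !cat_take_drop => /val_inj.
rewrite -(size_allpairs pair) -(size_map cut).
apply: uniq_leq_size; first by rewrite map_inj_uniq ?uniq_ball.
move=> _ /mapP [w + ->]; rewrite mem_ball => Hw; apply/allpairsP; exists (cut w).
split=> //; rewrite mem_ball /wlen /= ?size_take ?size_drop -/(wlen w); [case: ifP|]; lia.
Qed.

Variable S : FX X -> bool.

Definition holes (om : FX X) N : nat := count (fun d => ~~ S (mulFX om d)) (ball N).

Lemma card_inter_add_holes om N : card_inter S om N + holes om N = size (ball N).
Proof. by rewrite /card_inter count_map count_predC. Qed.

Variable m : nat.
Hypothesis translates_miss : forall om, has (fun b => ~~ S (mulFX om b)) (ball m).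

Lemma size_ball_le_holes_mul om N :
  m <= N -> size (ball (N - m)) <= holes om N * size (ball m).
Proof.
move=> le_mN.
pose hole c := nth c (ball m) (find (fun b => ~~ S (mulFX (mulFX om c) b)) (ball m)).
have hole_notin c : ~~ S (mulFX (mulFX om c) (hole c)).
  exact: (nth_find c (translates_miss (mulFX om c))).
have hole_ball c : hole c \in ball m by apply: mem_nth; rewrite -has_find translates_miss.
pose f c := (mulFX c (hole c), hole c).
have f_inj : injective f.
  move=> c1 c2 E; have E1 : mulFX c1 (hole c1) = mulFX c2 (hole c2) := congr1 fst E.
  have E2 : hole c1 = hole c2 := congr1 snd E.
  by apply: (@mulFX_inj_r _ (hole c1)); rewrite E1 E2.
rewrite /holes -size_filter -(size_allpairs pair) -(size_map f).
apply: uniq_leq_size; first by rewrite map_inj_uniq ?uniq_ball.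
move=> _ /mapP [c + ->]; rewrite mem_ball => Hc; apply/allpairsP; exists (f c).
split=> //=; rewrite mem_filter mulFXA hole_notin mem_ball /=.
by apply: leq_trans (wlen_mulFX _ _) _; move: (hole_ball c); rewrite mem_ball; lia.
Qed.

Lemma card_inter_gap om N (M := size (ball m)) :
  m <= N -> card_inter S om N * (M * M) + size (ball N) <= size (ball N) * (M * M).
Proof.
move=> le_mN; have := card_inter_add_holes om N.
have := size_ball_le_mul le_mN; have := size_ball_le_holes_mul om le_mN.
nia.
Qed.

End Balls.

Lemma Lub_Rbar_le (E : R -> Prop) (x0 b : R) :
  E x0 -> (forall x, E x -> x <= b) -> real (Lub_Rbar E) <= b.
Proof.
move=> Ex0 E_le_b; have [ub lub] := Lub_Rbar_correct E.
have : Rbar_le (Lub_Rbar E) b by apply: lub.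
by move: (ub x0 Ex0); case: (Lub_Rbar E).
Qed.

Lemma Lub_Rbar_max (E : R -> Prop) (b : R) :
  E b -> (forall x, E x -> x <= b) -> real (Lub_Rbar E) = b.
Proof.
move=> Eb E_le_b.
suff -> : Lub_Rbar E = Rbar.Finite b by [].
by apply: is_lub_Rbar_unique; split=> [x /E_le_b|l]; last apply.
Qed.

Lemma Rdiv_le_1_subr_inv (c s k : R) :
  0 < s -> 0 < k -> c * k + s <= s * k -> c / s <= 1 - / k.
Proof.
move=> s_gt0 k_gt0 H.
apply/Rle_div_l => //; apply: (Rmult_le_reg_r k) => //.
have -> : (1 - / k) * s * k = s * k - s by field; lra.
lra.
Qed.

Section Density.
Variables (X : finType) (S : FX X -> bool).
Local Notation ball := (Defs.ball X).

Lemma INR_size_ball_gt0 n : 0 < INR (size (ball n)).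
Proof. exact/lt_0_INR/ltP/size_ball_gt0. Qed.

Lemma ratio_le1 om n : ratio S om n <= 1.
Proof.
apply/Rle_div_l; first exact: INR_size_ball_gt0.
rewrite Rmult_1_l; apply/le_INR/leP.
by rewrite -(card_inter_add_holes S om n) leq_addr.
Qed.

Lemma ratio_eq1 om n :
  (forall b, (wlen b <= n)%N -> S (mulFX om b)) -> ratio S om n = 1.
Proof.
move=> covered; rewrite /ratio /card_inter count_map.
have -> : count (fun b => S (mulFX om b)) (ball n) = size (ball n).
  by apply/eqP; rewrite -all_count; apply/allP => b; rewrite mem_ball; apply: covered.
by apply: Rinv_r; apply: Rgt_not_eq; apply: INR_size_ball_gt0.
Qed.

Lemma max_ratio_eq1 n :
  (exists om, forall b, (wlen b <= n)%N -> S (mulFX om b)) -> max_ratio S n = 1.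
Proof.
move=> [om covered]; apply: Lub_Rbar_max; first by exists om; rewrite ratio_eq1.
by move=> _ [om' ->]; apply: ratio_le1.
Qed.

Lemma UB_density_le (m : nat) (M := size (ball m)) :
  (forall om, has (fun b => ~~ S (mulFX om b)) (ball m)) ->
  Rbar_le (UB_density S) (1 - / INR (M * M)).
Proof.
move=> miss; rewrite /UB_density -LimSup_seq_const; apply: LimSup_le.
exists m => N /leP le_mN; apply: (@Lub_Rbar_le _ (ratio S (oneFX X) N)).
  by exists (oneFX X).
move=> _ [om ->]; apply: Rdiv_le_1_subr_inv; first exact: INR_size_ball_gt0.
  by rewrite mult_INR; apply: Rmult_lt_0_compat; apply: INR_size_ball_gt0.
by rewrite -!mult_INR -plus_INR; apply/le_INR/leP/card_inter_gap.
Qed.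

End Density.

Theorem proposition2p2 (X : finType) (S : FX X -> bool) :
  UB_generic S <->
  (forall n : nat, exists om : FX X,
     forall b : FX X, (wlen b <= n)%N -> S (mulFX om b)).
Proof.
split=> [UB m | covered]; last first.
  rewrite /UB_generic /UB_density.
  have -> : max_ratio S = fun=> 1 by apply: functional_extensionality => n; apply: max_ratio_eq1.
  exact: LimSup_seq_const.
apply: NNPP => not_covered.
have miss om : has (fun b => ~~ S (mulFX om b)) (Defs.ball X m).
  apply/negPn/negP => /hasPn covered; apply: not_covered; exists om => b.
  by rewrite -mem_ball => /covered /negbNE.
have := UB_density_le miss; rewrite UB /=.
have : 0 < / INR (size (Defs.ball X m) * size (Defs.ball X m)).
  by apply/Rinv_0_lt_compat/lt_0_INR/ltP; rewrite muln_gt0 size_ball_gt0.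
lra.
Qed.
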